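(* Let $\Phi$ be a convex growth function. Then for any $z=x+iy\in \mathbb{C}_+$, the function $$f_z(w):=\Phi^{-1}\left(\frac 1y\right)\frac{y^2}{(w-\bar{z})^2},\quad w\in\mathbb{C}_+,$$ is in $H^\Phi(\mathbb{C}_+)$. Moreover, $\sup_{v>0}\int_{\mathbb{R}}\Phi(|f_z(u+iv)|)du\le \pi$.
   Context: $\mathbb{C}_+=\{x+iy: y>0\}$. A growth function is a continuous nondecreasing function from $[0,\infty)$ onto $[0,\infty)$; $\Phi^{-1}$ is its inverse. $H^\Phi(\mathbb{C}_+)$ is the space of holomorphic $f$ on $\mathbb{C}_+$ with $\sup_{y>0}\inf\{\lambda>0:\int_{\mathbb{R}}\Phi(|f(x+iy)|/\lambda)dx\le1\}<\infty$. *)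

From HB Require Import structures.
From mathcomp Require Import all_boot all_order all_algebra.
From mathcomp Require Import complex.
From mathcomp Require Import all_classical all_reals all_analysis.
Set Implicit Arguments. Unset Strict Implicit. Unset Printing Implicit Defensive.
Import Order.TTheory GRing.Theory Num.Theory.
Import numFieldNormedType.Exports.
Local Open Scope classical_set_scope.
Local Open Scope ring_scope.
Local Open Scope complex_scope.

Section Defs.
Variable R : realType.

Definition growth_function (Phi : R -> R) : Prop :=
  [/\ {within [set x : R | 0 <= x], continuous Phi},
      (forall a b : R, 0 <= a -> a <= b -> Phi a <= Phi b),
      (forall a : R, 0 <= a -> 0 <= Phi a) &
      (forall t : R, 0 <= t -> exists2 a : R, 0 <= a & Phi a = t)].

Definition convex_on_nonneg (Phi : R -> R) : Prop :=
  forall (a b t : R), 0 <= a -> 0 <= b -> 0 <= t -> t <= 1 ->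
    Phi (t * a + (1 - t) * b) <= t * Phi a + (1 - t) * Phi b.

Definition upper_half_plane : set R[i] := [set w | 0 < complex.Im w].

Definition complex_differentiable_at (f : R[i] -> R[i]) (w : R[i]) : Prop :=
  exists l : R[i], forall eps : R, 0 < eps -> exists2 delta : R, 0 < delta &
    forall h : R[i], h != 0 -> Normc.normc h < delta ->
      Normc.normc ((f (w + h) - f w) / h - l) < eps.

Definition holomorphic_on (D : set R[i]) (f : R[i] -> R[i]) : Prop :=
  forall w, D w -> complex_differentiable_at f w.

Definition lux_line (Phi : R -> R) (f : R[i] -> R[i]) (y : R) : \bar R :=
  ereal_inf [set (lam%:E) | lam in [set lam : R | 0 < lam /\
     (\int[@lebesgue_measure R]_x (Phi (Normc.normc (f (Complex x y)) / lam))%:E <= 1)%E]].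

Definition HPhi (Phi : R -> R) (f : R[i] -> R[i]) : Prop :=
  holomorphic_on upper_half_plane f /\
  (ereal_sup [set lux_line Phi f y | y in [set y : R | (0 < y)%R]] < +oo)%E.

End Defs.

(* Write z = x + iy, so Phi s = 1/y, and let c = v + y > y for a height v > 0.
   On the line Im w = v, m |f_z(u + iv)| = t s with t = m y^2 / ((u - x)^2 + c^2),
   and t <= m <= 1.  Convexity and Phi 0 = 0 give Phi (t s) <= t Phi s = t / y,
   which is at most m c / ((u - x)^2 + c^2): m times the Poisson kernel at x + ic,
   whose integral over R is pi.  With m = 1 this bounds the modular integrals by
   pi; with m = 1/(pi + 1) it bounds every Luxemburg norm by pi + 1. *)
From HB Require Import structures.
From mathcomp Require Import all_boot all_order all_algebra.
From mathcomp Require Import complex.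
From mathcomp Require Import all_classical all_reals all_analysis.
From mathcomp Require Import ring lra measurable_realfun.
Import Order.TTheory GRing.Theory Num.Theory.
Import numFieldNormedType.Exports.
Import Normc.
Local Open Scope classical_set_scope.
Local Open Scope ring_scope.
Local Open Scope complex_scope.

Section HalfPlaneKernel.
Variable R : realType.
Implicit Types z : R[i].

Lemma normc_ge0 z : 0 <= normc z.
Proof. exact: (@normr_ge0 _ (Rcomplex R)). Qed.

Lemma normc_gt0 z : z != 0 -> 0 < normc z.
Proof. by rewrite -(@normr_gt0 _ (Rcomplex R)). Qed.

Lemma normcX z n : normc (z ^+ n) = normc z ^+ n.
Proof.
elim: n => [|n IH]; first by rewrite !expr0 normc1.
by rewrite !exprS normcM IH.
Qed.

Lemma complex_differentiable_at_remainder f (w l : R[i]) (C r : R) : 0 < r ->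
  (forall h, h != 0 -> normc h < r ->
     normc ((f (w + h) - f w) / h - l) <= C * normc h) ->
  complex_differentiable_at f w.
Proof.
move=> r0 rem; exists l => eps eps0.
have C1 : 0 < `|C| + 1 by rewrite ltr_wpDl.
exists (Num.min r (eps / (`|C| + 1))) => [|h h0].
  by rewrite lt_min r0 divr_gt0.
rewrite lt_min => /andP[hr heps].
have b0 := normc_ge0 h.
apply: (le_lt_trans (rem h h0 hr)).
apply: (le_lt_trans (ler_wpM2r b0 (ler_norm C))).
move: heps; rewrite ltr_pdivlMr // => heps.
by apply: le_lt_trans heps; rewrite mulrDr mulr1 mulrC lerDl.
Qed.

Lemma inv_sqr_difference_quotient (K d h : R[i]) :
  d != 0 -> h != 0 -> d + h != 0 ->
  (K / (d + h) ^+ 2 - K / d ^+ 2) / h - - (K *+ 2) / d ^+ 3 =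
  K * h * (d *+ 3 + h *+ 2) / (d ^+ 3 * (d + h) ^+ 2).
Proof. by move=> d0 h0 dh0; field; rewrite h0 dh0 d0. Qed.

(* The remainder estimate for w |-> K / w^2 at d with increment h, |h| < |d|/2:
   n = |d|, b = |h|, q = |d + h|, N = |3d + 2h|, k = |K|. *)
Lemma inv_sqr_remainder_le (k b n q N : R) :
  0 <= k -> 0 <= b -> 0 < n -> b < n / 2 -> n <= q + b ->
  N <= n *+ 3 + b *+ 2 ->
  k * b * N / (n ^+ 3 * q ^+ 2) <= 16 * k / n ^+ 4 * b.
Proof.
move=> k0 b0 n0 bn nq hN.
have qp : 0 < q by lra.
have hN4 : N <= 4 * n by move: hN; rewrite -[n *+ 3]mulr_natr -[b *+ 2]mulr_natr; lra.
have nq2 : n ^+ 2 <= 4 * q ^+ 2.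
  have -> : 4 * q ^+ 2 = (2 * q) ^+ 2 by ring.
  by rewrite lerXn2r ?nnegrE; lra.
rewrite ler_pdivrMr ?mulr_gt0 ?exprn_gt0 //.
apply: (le_trans (ler_wpM2l (mulr_ge0 k0 b0) hN4)).
have -> : 16 * k / n ^+ 4 * b * (n ^+ 3 * q ^+ 2) =
          (k * b * (4 * n)) * (4 * q ^+ 2 / n ^+ 2).
  by field; rewrite gt_eqF.
rewrite ler_peMr //; first by rewrite !mulr_ge0 // ltW.
by rewrite ler_pdivlMr ?exprn_gt0 // mul1r.
Qed.

Lemma complex_differentiable_inv_sqr (K c w : R[i]) : w - c != 0 ->
  complex_differentiable_at (fun w => K / (w - c) ^+ 2) w.
Proof.
move=> d0; have nd0 : 0 < normc (w - c) by exact: normc_gt0.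
apply: (@complex_differentiable_at_remainder _ _ (- (K *+ 2) / (w - c) ^+ 3)
  (16 * normc K / normc (w - c) ^+ 4) (normc (w - c) / 2)) => [|h h0 hd].
  by rewrite divr_gt0.
have dh : normc (w - c) <= normc (w - c + h) + normc h.
  by have := le_normcD (w - c + h) (- h); rewrite normcN addrK.
have dh0 : w - c + h != 0.
  apply: contraTneq dh => ->; rewrite normc0 add0r -ltNge.
  by apply: lt_trans hd _; rewrite ltr_pdivrMr // ltr_pMr // ltr1n.
have hN : normc ((w - c) *+ 3 + h *+ 2) <= normc (w - c) *+ 3 + normc h *+ 2.
  by rewrite -!normcMn le_normcD.
rewrite addrAC inv_sqr_difference_quotient //.
rewrite normcM normcV (normcM ((w - c) ^+ 3)) !normcX !normcM.
by apply: inv_sqr_remainder_le; rewrite ?normc_ge0.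
Qed.

Lemma growth_function0 (Phi : R -> R) : growth_function Phi -> Phi 0 = 0.
Proof.
case=> _ mono Phi_ge0 onto; have [a a0 Pa0] := onto 0 (lexx 0).
by apply/eqP; rewrite eq_le Phi_ge0 // andbT -[X in _ <= X]Pa0 mono.
Qed.

Lemma convex_growth_function_scale_le (Phi : R -> R) (t a : R) :
  growth_function Phi -> convex_on_nonneg Phi ->
  0 <= t -> t <= 1 -> 0 <= a -> Phi (t * a) <= t * Phi a.
Proof.
move=> growth convex t0 t1 a0.
have := convex a 0 t a0 (lexx 0) t0 t1.
by rewrite mulr0 addr0 growth_function0 // mulr0 addr0.
Qed.

Lemma measurable_nondecreasing_comp (Phi h : R -> R) :
  (forall a b, 0 <= a -> a <= b -> Phi a <= Phi b) ->
  measurable_fun setT h -> (forall u, 0 <= h u) ->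
  measurable_fun setT (fun u => Phi (h u)).
Proof.
move=> mono mh h_ge0.
(* Phi is only monotone on [0, +oo); clamp its argument there first. *)
have -> : (fun u => Phi (h u)) = (fun t => Phi (Num.max t 0)) \o h.
  by apply/funext => u; rewrite /= max_l.
apply: measurableT_comp mh; apply: nondecreasing_measurable => // a b ab.
by apply: mono; [rewrite le_max lexx orbT | rewrite le_max2].
Qed.

(* The Poisson kernel of the upper half-plane at a + ic, without the factor 1/pi. *)
Definition poisson_kernel (a c u : R) : R := c / ((u - a) ^+ 2 + c ^+ 2).

Lemma poisson_kernel_ge0 (a c u : R) : 0 <= c -> 0 <= poisson_kernel a c u.
Proof. by move=> c0; rewrite divr_ge0 // addr_ge0 ?sqr_ge0. Qed.

Lemma continuous_poisson_kernel (a c : R) : 0 < c ->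
  continuous (poisson_kernel a c).
Proof.
move=> c0 u; apply: cvgMl_tmp; apply: cvgV.
  by rewrite gt_eqF // ltr_pwDr ?exprn_gt0 ?sqr_ge0.
apply: cvgD; last exact: cvg_cst.
have -> : (fun z : R => (z - a) ^+ 2) = (fun z : R => (z - a) * (z - a)).
  by apply/funext => z; rewrite expr2.
by apply: cvgM; apply: cvgB; (exact: cvg_id || exact: cvg_cst).
Qed.

Local Notation mu := (@lebesgue_measure R).

Lemma integral_oneDsqrV : (\int[mu]_u ((oneDsqr u)^-1)%:E = (pi : R)%:E)%E.
Proof.
rewrite (@ge0_symfun_integralT _ (fun u : R => (oneDsqr u)^-1)).
- rewrite -set_itvcy integral0y_oneDsqr -EFinM; congr EFin.
  by rewrite mulrC -mulrA mulVf ?mulr1.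
- by move=> u; rewrite invr_ge0 ltW // (lt_le_trans ltr01 (oneDsqr_ge1 _)).
- exact: continuous_oneDsqrV.
- by move=> u /=; rewrite /oneDsqr sqrrN.
Qed.

Lemma integral_poisson_kernel (a c : R) : 0 < c ->
  (\int[mu]_u (poisson_kernel a c u)%:E = (pi : R)%:E)%E.
Proof.
move=> c0; pose F u := (u - a) / c.
have dF : derive1 F = cst c^-1.
  apply/funext => u; rewrite derive1E /F.
  by rewrite derive_val /= scaler0 add0r subr0 /GRing.scale /= mulr1.
rewrite -integral_oneDsqrV.
rewrite (@increasing_ge0_integration_by_substitutionT _ F (fun u => (oneDsqr u)^-1)).
- apply: eq_integral => u _; congr EFin; rewrite dF /= /F /oneDsqr /poisson_kernel.
  have D0 : c ^+ 2 + (u - a) ^+ 2 != 0.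
    by rewrite gt_eqF // ltr_pwDl ?exprn_gt0 ?sqr_ge0.
  transitivity ((1 + ((u - a) / c) ^+ 2)^-1 * c^-1); last by [].
  by field; rewrite D0 gt_eqF.
- by move=> u v uv; rewrite /F ltr_pM2r ?invr_gt0 // ltrD2r.
- by rewrite dF => u; exact: cst_continuous.
- by rewrite dF; exact: is_cvg_cst.
- by rewrite dF; exact: is_cvg_cst.
- by move=> u; rewrite /F; exact: ex_derive.
- apply/cvgrNyPle => A; near=> z; rewrite /F ler_pdivrMr // lerBlDr.
  by near: z; apply: nbhs_ninfty_le; rewrite num_real.
- apply/cvgryPge => A; near=> z; rewrite /F ler_pdivlMr // lerBrDr.
  by near: z; apply: nbhs_pinfty_ge; rewrite num_real.
- exact: continuous_oneDsqrV.
- by move=> u; rewrite invr_ge0 ltW // (lt_le_trans ltr01 (oneDsqr_ge1 _)).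
Unshelve. all: end_near.
Qed.

Lemma sub_conjcE (a b x y : R) :
  a +i* b - conjc (x +i* y) = (a - x) +i* (b + y).
Proof. by apply/eqP; rewrite eq_complex /= opprK !eqxx. Qed.

Lemma normc_inv_sqr_sub_conjc (s x y u v : R) : 0 <= s -> 0 < v + y ->
  normc ((s * y ^+ 2)%:C / (u +i* v - conjc (x +i* y)) ^+ 2) =
  s * y ^+ 2 / (v + y) * poisson_kernel x (v + y) u.
Proof.
move=> s0 c0; rewrite sub_conjcE normcM normcV normcX /poisson_kernel.
have -> : normc (s * y ^+ 2)%:C = s * y ^+ 2.
  by rewrite /normc /= expr0n /= addr0 sqrtr_sqr ger0_norm // mulr_ge0 ?sqr_ge0.
rewrite /normc sqr_sqrtr ?addr_ge0 ?sqr_ge0 //.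
by field; rewrite !gt_eqF // ltr_pwDr ?exprn_gt0 ?sqr_ge0.
Qed.

Section ConvexGrowthFunction.
Variables (Phi : R -> R) (x y s : R).
Hypotheses (growth : growth_function Phi) (convex : convex_on_nonneg Phi).
Hypotheses (y0 : 0 < y) (s0 : 0 <= s) (Phi_s : Phi s = y^-1).

Lemma Phi_inv_sqr_le_poisson (m u v : R) : 0 < v -> 0 <= m -> m <= 1 ->
  Phi (s * y ^+ 2 / (v + y) * poisson_kernel x (v + y) u * m) <=
  m * poisson_kernel x (v + y) u.
Proof.
move=> v0 m0 m1; set c := v + y.
have c0 : 0 < c by rewrite addr_gt0.
have yc : y <= c by rewrite lerDr ltW.
have D0 : 0 < (u - x) ^+ 2 + c ^+ 2 by rewrite ltr_pwDr ?exprn_gt0 ?sqr_ge0.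
set D := (u - x) ^+ 2 + c ^+ 2 in D0 *; rewrite /poisson_kernel -/c -/D.
have -> : s * y ^+ 2 / c * (c / D) * m = (m * y ^+ 2 / D) * s.
  by field; rewrite !gt_eqF.
apply: (le_trans (convex_growth_function_scale_le _ _ s growth convex _ _ s0)).
- by rewrite divr_ge0 ?mulr_ge0 ?sqr_ge0 // ltW.
- rewrite ler_pdivrMr // mul1r; apply: le_trans (ler_piMl (sqr_ge0 _) m1) _.
  have y2c2 : y ^+ 2 <= c ^+ 2 by rewrite lerXn2r // nnegrE ltW.
  by apply: le_trans y2c2 _; rewrite lerDr sqr_ge0.
rewrite Phi_s.
have -> : m * y ^+ 2 / D * y^-1 = m * (y / D) by field; rewrite !gt_eqF.
by rewrite ler_wpM2l // ler_pM2r ?invr_gt0.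
Qed.

Lemma integral_Phi_inv_sqr_le (m v : R) : 0 < v -> 0 <= m -> m <= 1 ->
  (\int[mu]_u
     (Phi (normc ((s * y ^+ 2)%:C / (u +i* v - conjc (x +i* y)) ^+ 2) * m))%:E
   <= (m * pi)%:E)%E.
Proof.
move=> v0 m0 m1; have c0 : 0 < v + y by rewrite addr_gt0.
have c_ge0 := ltW c0.
have [_ mono Phi_ge0 _] := growth.
have k0 : 0 <= s * y ^+ 2 / (v + y) by rewrite divr_ge0 // mulr_ge0 // sqr_ge0.
have arg0 u : 0 <= s * y ^+ 2 / (v + y) * poisson_kernel x (v + y) u * m.
  by rewrite mulr_ge0 // mulr_ge0 // poisson_kernel_ge0.
under eq_integral do rewrite normc_inv_sqr_sub_conjc //.
have mP : measurable_fun setT (poisson_kernel x (v + y)).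
  by apply: continuous_measurable_fun; exact: continuous_poisson_kernel.
have mPhi : measurable_fun setT
    (fun u => Phi (s * y ^+ 2 / (v + y) * poisson_kernel x (v + y) u * m)).
  apply: measurable_nondecreasing_comp => //.
  by apply: measurable_funM => //; apply: measurable_funM.
apply: (@le_trans _ _ (\int[mu]_u (m * poisson_kernel x (v + y) u)%:E)%E).
  apply: ge0_le_integral => //.
  - by move=> u _; rewrite lee_fin Phi_ge0.
  - exact/measurable_EFinP.
  - by apply/measurable_EFinP; apply: measurable_funM.
  - by move=> u _; rewrite lee_fin Phi_inv_sqr_le_poisson.
under eq_integral do rewrite EFinM.
rewrite ge0_integralZl_EFin ?integral_poisson_kernel -?EFinM //.
- by move=> u _; rewrite lee_fin poisson_kernel_ge0.
- exact/measurable_EFinP.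
Qed.

End ConvexGrowthFunction.
End HalfPlaneKernel.

Theorem lemma3p8 (R : realType) (Phi : R -> R)
  (hgrowth : growth_function Phi) (hconvex : convex_on_nonneg Phi)
  (x y : R) (hy : 0 < y)
  (s : R) (hs0 : 0 <= s) (hs : Phi s = y^-1) (* s = Phi^{-1}(1/y) *) :
  let f := fun w : R[i] => (s * y ^+ 2)%:C / (w - conjc (x +i* y)) ^+ 2 in
  HPhi Phi f /\
  (ereal_sup [set (\int[@lebesgue_measure R]_u (Phi (Normc.normc (f (Complex u v))))%:E)%E
              | v in [set v : R | (0 < v)%R]] <= (pi : R)%:E)%E.
Proof.
move=> f; have pi0 : (0 : R) < pi := pi_gt0 R.
have modular_le := @integral_Phi_inv_sqr_le R Phi x y s hgrowth hconvex hy hs0 hs.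
split; first split.
- move=> [a b]; rewrite /upper_half_plane /= => b0.
  apply: complex_differentiable_inv_sqr.
  by rewrite sub_conjcE eq_complex negb_and /= orbC gt_eqF // addr_gt0.
- apply: (@le_lt_trans _ _ (pi + 1)%:E); last exact: ltry.
  apply: ge_ereal_sup => _ [v v0 <-].
  apply: ereal_inf_lbound; exists (pi + 1) => //; split; first lra.
  have m0 : 0 <= (pi + 1 : R)^-1 by rewrite invr_ge0; lra.
  have m1 : (pi + 1 : R)^-1 <= 1 by rewrite invf_le1; lra.
  apply: le_trans (modular_le _ v v0 m0 m1) _.
  by rewrite lee_fin mulrC ler_pdivrMr; lra.
- apply: ge_ereal_sup => _ [v v0 <-].
  have := modular_le 1 v v0 ler01 (lexx 1); rewrite mul1r.
  by under eq_integral do rewrite mulr1.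
Qed.
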